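(* Let $C$ be a cake, $S$ a family of usable pieces, and $C_0\subseteq C_1\subseteq C$ pieces. Let $K$ be an $S$-good knife function on $C$ from $C_0$ to $C_1$. Let two agents $A,B$ have value measures $V_A,V_B$ on $C$ normalized so that $V_A(C)=V_B(C)=1$, and suppose that for each $i\in\{A,B\}$: $V_i^S(C_0)\le V_i^S(C\setminus C_0)$ and $V_i^S(C_1)\ge V_i^S(C\setminus C_1)$. Then for each $i$ there is $t_i\in[0,1]$ with $V_i^S(K(t_i))=V_i^S(C\setminus K(t_i))$; after renaming the agents so that $t_A\le t_B$, for every $t^*\in[t_A,t_B]$, giving $K(t^* )$ to $A$ and $C\setminus K(t^* )$ to $B$ yields a division in which each agent's $S$-value of his own piece is at least his $S$-value of the other piece, and each agent $i$'s $S$-value of his own piece is at least $$\max\Big(V_i^S(C_0),\ V_i^S(C\setminus C_1),\ \frac{1}{\mathrm{Loss}(K,S)}\Big).$$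
   Context: A cake is a Borel subset $C\subseteq\mathbb{R}^d$; a piece is a Borel subset of $\mathbb{R}^d$. A value measure on $C$ is $V(X)=\int_X v$ with $v$ non-negative, bounded, integrable on $C$, $V(C)<\infty$. $S$ is a family of pieces; $V^S(X):=\sup\{V(s):s\in S, s\subseteq X\}$. $\mathrm{Loss}(X,S):=\sup_V V(X)/V^S(X)$ over finite Lebesgue-absolutely-continuous measures $V$ with $V^S(X)>0$ ($\infty$ if unbounded). A knife function on $C$ is a map $K$ from $[0,1]$ to Borel subsets of $C$ with $K(t)\subseteq K(t')$ whenever $t\le t'$; it is a knife function from $C_0$ to $C_1$ if $K(0)=C_0$ and $K(1)=C_1$. Its complement is $\overline{K}(t):=C\setminus K(t)$. $K$ is $S$-good if for every finite measure $V$ absolutely continuous w.r.t. Lebesgue measure, both $t\mapsto V^S(K(t))$ and $t\mapsto V^S(\overline K(t))$ are continuous. The geometric loss of $K$ is $\mathrm{Loss}(K,S):=\sup_{t\in[0,1]}\big(\mathrm{Loss}(K(t),S)+\mathrm{Loss}(\overline K(t),S)\big)$. *)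

From HB Require Import structures.
From mathcomp Require Import all_boot all_order all_algebra.
From mathcomp Require Import all_classical all_reals all_analysis.

Set Implicit Arguments.
Unset Strict Implicit.
Unset Printing Implicit Defensive.

Import Order.TTheory GRing.Theory Num.Theory.
Local Open Scope classical_set_scope.
Local Open Scope ring_scope.

(* R^d is realised as the iterated product R * (R * ( ... * unit)), whose     *)
(* product sigma-algebra is the Borel sigma-algebra of R^d, and Lebesgue      *)
(* measure on it is the iterated product of the 1-dimensional Lebesgue        *)
(* measure (restricted to Borel sets).                                        *)

Fixpoint Rspace (R : realType) (d : nat) : {disp : measure_display & measurableType disp} :=
  match d with
  | O => existT (fun disp => measurableType disp) _ (unit : measurableType _)
  | S d' => existT (fun disp => measurableType disp) _ ((R * projT2 (Rspace R d'))%type : measurableType _)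
  end.

Definition Rd (R : realType) (d : nat) : measurableType (projT1 (Rspace R d)) :=
  projT2 (Rspace R d).

Fixpoint lebesgue_d (R : realType) (d : nat) : set (Rd R d) -> \bar R :=
  match d return set (Rd R d) -> \bar R with
  | O => (fun A => if `[< A tt >] then 1%E else 0%E)
  | S d' => (@lebesgue_measure R \x @lebesgue_d R d')%E
  end.

Section CakeDefs.
Variables (R : realType) (d : nat).
Local Notation T := (Rd R d).
Local Notation lam := (@lebesgue_d R d).
Local Open Scope ereal_scope.

Definition piece (X : set T) : Prop := measurable X.

Definition value_density (C : set T) (v : T -> R) : Prop :=
  (forall x, C x -> (0 <= v x)%R) /\
  (exists M : R, forall x, C x -> (v x <= M)%R) /\
  lam.-integrable C (fun x => (v x)%:E).

Definition value_measure (v : T -> R) (X : set T) : \bar R :=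
  \int[lam]_(x in X) (v x)%:E.

(* V^S(X) = sup { V(s) : s in S, s included in X }  (sup of the empty set = 0) *)
Definition VS (V : set T -> \bar R) (S : set (set T)) (X : set T) : \bar R :=
  ereal_sup ([set 0] `|` [set V s | s in [set s | S s /\ s `<=` X]]).

Definition ac_finite (V : {finite_measure set T -> \bar R}) : Prop :=
  V `<< lam.

Definition loss_ratios (X : set T) (S : set (set T)) : set (\bar R) :=
  [set r | exists V : {finite_measure set T -> \bar R},
      [/\ ac_finite V, 0 < VS V S X & r = V X * (VS V S X)^-1]].

Definition Loss (X : set T) (S : set (set T)) : \bar R :=
  if `[< exists r, loss_ratios X S r >] then ereal_sup (loss_ratios X S)
  else (if `[< lam X = 0 >] then 0 else +oo).

Definition knife_function (C C0 C1 : set T) (K : R -> set T) : Prop :=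
  (forall t, t \in `[0%R, 1%R] -> piece (K t) /\ K t `<=` C) /\
  (forall t t', t \in `[0%R, 1%R] -> t' \in `[0%R, 1%R] -> (t <= t')%R -> K t `<=` K t') /\
  K 0%R = C0 /\ K 1%R = C1.

Definition knife_compl (C : set T) (K : R -> set T) (t : R) : set T := C `\` K t.

Definition S_good (C : set T) (S : set (set T)) (K : R -> set T) : Prop :=
  forall V : {finite_measure set T -> \bar R}, ac_finite V ->
    {within `[0%R, 1%R], continuous (fun t => VS V S (K t))} /\
    {within `[0%R, 1%R], continuous (fun t => VS V S (knife_compl C K t))}.

Definition knife_loss (C : set T) (S : set (set T)) (K : R -> set T) : \bar R :=
  ereal_sup [set Loss (K t) S + Loss (knife_compl C K t) S | t in `[0%R, 1%R]].

End CakeDefs.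

From HB Require Import structures.
From mathcomp Require Import all_boot all_order all_algebra.
From mathcomp Require Import all_classical all_reals all_analysis.
From mathcomp Require Import lra.
Import Order.TTheory GRing.Theory Num.Theory.
Local Open Scope classical_set_scope.
Local Open Scope ring_scope.

(* Each agent's S-value of K(t) and of its complement is continuous in t (S-goodness,
   applied to the finite measure with density v_i), so the intermediate value theorem
   yields a balancing point t_i.  By monotonicity of K, for t >= t_i the piece K(t) is
   worth at least V^S(K(t_i)) = V^S(C \ K(t_i)) >= V^S(C \ K(t)), as well as
   V^S(C0) = V^S(K(0)) and V^S(C \ C1); symmetrically for the complement when t <= t_i.
   At a balancing point with common S-value a, the normalisation
   V(K(t)) + V(C \ K(t)) = 1 gives 1/a = V(K(t))/a + V(C \ K(t))/a
   <= Loss(K(t)) + Loss(C \ K(t)) <= Loss(K, S).  If a = 0, one of the two pieces has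
   positive value but S-value 0, and its loss is infinite. *)

Section finite_measure_add.
Context d (T : measurableType d) (R : realType).
Variables m1 m2 : {finite_measure set T -> \bar R}.

HB.instance Definition _ := Measure.on (measure_add m1 m2).

Let fin_num_measure_add : fin_num_fun (measure_add m1 m2).
Proof. by move=> A mA; rewrite measure_addE fin_numD !fin_num_measure. Qed.

HB.instance Definition _ :=
  Measure_isFinite.Build _ _ _ (measure_add m1 m2) fin_num_measure_add.

End finite_measure_add.

Section density_measure.
Context {d : measure_display} {T : measurableType d} {R : realType}
  {mu : {measure set T -> \bar R}} {f : T -> \bar R}.
Hypotheses (intf : mu.-integrable setT f) (f_ge0 : forall x, (0 <= f x)%E).

Let induced_charge_ge0 A : (0 <= induced_charge intf A)%E.
Proof. exact: integral_ge0. Qed.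

Definition density_measure := measure_of_charge _ induced_charge_ge0.

HB.instance Definition _ := Measure.on density_measure.

Let fin_num_density_measure : fin_num_fun density_measure.
Proof. by move=> A mA; rewrite fin_num_measure. Qed.

HB.instance Definition _ :=
  Measure_isFinite.Build _ _ _ density_measure fin_num_density_measure.

Lemma density_measureE A : density_measure A = (\int[mu]_(x in A) f x)%E.
Proof. by []. Qed.

Lemma density_measure_dominates : density_measure `<< mu.
Proof.
apply/null_content_dominatesP => A mA muA0; rewrite density_measureE.
have mf := measurable_int _ intf.
apply: null_set_integral => //; exact: measurable_funS mf.
Qed.

End density_measure.

Section product_measure1_sigma_finite.
Context d1 d2 (T1 : measurableType d1) (T2 : measurableType d2) (R : realType).
Variables (m1 : {sigma_finite_measure set T1 -> \bar R})
  (m2 : {sigma_finite_measure set T2 -> \bar R}).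

Lemma product_measure1_sigma_finite : sigma_finite setT (m1 \x m2)%E.
Proof.
have /sigma_finiteP[F [UF ndF Ffin]] := sigma_finiteT m1.
have /sigma_finiteP[G [UG ndG Gfin]] := sigma_finiteT m2.
exists (fun n => F n `*` G n); last first.
  move=> n; have [mF Fn] := Ffin n; have [mG Gn] := Gfin n.
  split; first exact: measurableX.
  by rewrite product_measure1E // lte_mul_pinfty // ge0_fin_numE.
apply/seteqP; split => [[x y] _|//].
have [i _ Fx] : (\bigcup_n F n) x by rewrite -UF.
have [j _ Gy] : (\bigcup_n G n) y by rewrite -UG.
exists (maxn i j) => //; split.
- exact: (subsetPset _ _ (ndF _ _ (leq_maxl i j))).
- exact: (subsetPset _ _ (ndG _ _ (leq_maxr i j))).
Qed.

End product_measure1_sigma_finite.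

Section lebesgue_succ.
Context {R : realType} {d : nat} (m : {sigma_finite_measure set (Rd R d) -> \bar R}).

Let prod := (@lebesgue_measure R \x m)%E.

(* [prod] lives on the product of the interval sigma-algebra on [R] with [Rd R d],
   which is only convertible to [Rd R d.+1]; the structures are transported here. *)
Definition lebesgue_succ : set (Rd R d.+1) -> \bar R := prod.

Let lebesgue_succ0 : lebesgue_succ set0 = 0%E. Proof. exact: measure0 prod. Qed.
Let lebesgue_succ_ge0 A : (0 <= lebesgue_succ A)%E. Proof. exact: measure_ge0 prod A. Qed.
Let lebesgue_succ_sigma_additive : semi_sigma_additive lebesgue_succ.
Proof. exact: (@measure_semi_sigma_additive _ _ _ prod). Qed.

HB.instance Definition _ := isMeasure.Build _ _ R lebesgue_succ
  lebesgue_succ0 lebesgue_succ_ge0 lebesgue_succ_sigma_additive.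

Let lebesgue_succ_sigma_finite : sigma_finite setT lebesgue_succ.
Proof. exact: (product_measure1_sigma_finite _ _ _ _ _ (@lebesgue_measure R) m). Qed.

HB.instance Definition _ :=
  Measure_isSigmaFinite.Build _ _ R lebesgue_succ lebesgue_succ_sigma_finite.

End lebesgue_succ.

Lemma lebesgue_d_sigma_finite (R : realType) (d : nat) :
  exists m : {sigma_finite_measure set (Rd R d) -> \bar R},
    (m : set _ -> _) = @lebesgue_d R d.
Proof.
elim: d => [|d [m mE]].
  exists (@dirac _ (Rd R 0) tt R); apply/funext => A /=.
  by rewrite /dirac indicE; case: asboolP => h; [rewrite mem_set | rewrite memNset].
by exists (lebesgue_succ m); rewrite /lebesgue_succ /= -mE.
Qed.

Section cake.
Context {R : realType} {d : nat}.
Local Notation T := (Rd R d).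
Local Notation lam := (@lebesgue_d R d).
Variable leb : {measure set T -> \bar R}.
Hypothesis lebE : leb = lam :> (set T -> \bar R).
Local Open Scope ereal_scope.
Implicit Types (V : set T -> \bar R) (S : set (set T)) (X Y : set T).

Lemma VS_ge0 V S X : 0 <= VS V S X.
Proof. by apply: ereal_sup_ubound; left. Qed.

Lemma le_VS V S X Y : X `<=` Y -> VS V S X <= VS V S Y.
Proof.
move=> XY; apply: ereal_sup_le => _ [->|[s [Ss sX] <-]]; first by left.
by right; exists s => //; split => //; exact: subset_trans XY.
Qed.

Lemma VS_ge_piece V S X s : S s -> s `<=` X -> V s <= VS V S X.
Proof. by move=> Ss sX; apply: ereal_sup_ubound; right; exists s. Qed.

Lemma eq_VS V1 V2 S X :
  (forall s, S s -> s `<=` X -> V1 s = V2 s) -> VS V1 S X = VS V2 S X.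
Proof.
move=> V12; rewrite /VS; congr (ereal_sup (_ `|` _)); apply/seteqP.
by split=> _ [s [Ss sX] <-]; exists s; rewrite // V12.
Qed.

Lemma VS_fin_num (V : {finite_measure set T -> \bar R}) S X :
  (forall s, S s -> measurable s) -> VS V S X \is a fin_num.
Proof.
move=> mS; rewrite ge0_fin_numE ?VS_ge0 //.
apply: (@le_lt_trans _ _ (V setT)); last exact: fin_num_fun_lty (@fin_num_measure _ _ _ V).
apply: ge_ereal_sup => _ [->|[s [Ss _] <-]]; first exact: measure_ge0.
by apply: le_measure; rewrite ?inE //; exact: mS.
Qed.

Lemma Loss_ge0 S X : 0 <= Loss X S.
Proof.
rewrite /Loss; case: asboolP => [[r [V [acV VS0 rE]]]|_]; last by case: asboolP.
apply: (@le_trans _ _ r); last by apply: ereal_sup_ubound; exists V; split.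
by rewrite rE mule_ge0 // inve_ge0 ltW.
Qed.

Lemma ratio_le_Loss (V : {finite_measure set T -> \bar R}) S X :
  ac_finite V -> 0 < VS V S X -> V X * (VS V S X)^-1 <= Loss X S.
Proof.
move=> acV VS0; rewrite /Loss asboolT; last by exists (V X * (VS V S X)^-1), V; split.
by apply: ereal_sup_ubound; exists V; split.
Qed.

Lemma ac_finite_null (V : {finite_measure set T -> \bar R}) X :
  ac_finite V -> measurable X -> lam X = 0 -> V X = 0.
Proof. by rewrite /ac_finite -lebE => /null_content_dominatesP; apply. Qed.

Lemma Loss_pinfty (V : {finite_measure set T -> \bar R}) S X :
  (forall s, S s -> measurable s) -> ac_finite V -> measurable X ->
  0 < V X -> VS V S X = 0 -> Loss X S = +oo.
Proof.
move=> mS acV mX VX0 VS0; rewrite /Loss; case: asboolP => [[_ [W [acW VSW0 _]]]|_].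
  apply/eqyP => M M0.
  have := VS_fin_num W S X mS; have := fin_num_measure V X mX.
  have := fin_num_measure W X mX.
  move=> /fineK WE /fineK VE /fineK VSWE.
  set u := fine (W X) in WE; set v := fine (V X) in VE; set w := fine (VS W S X) in VSWE.
  have u0 : (0 <= u)%R by rewrite -lee_fin WE.
  have v0 : (0 < v)%R by rewrite -lte_fin VE.
  have w0 : (0 < w)%R by rewrite -lte_fin VSWE.
  (* adding a large multiple of [V], which is invisible to [S] inside [X], leaves
     [V^S(X)] unchanged and makes [V(X)] arbitrarily large *)
  pose c : {nonneg R} := NngNum (ltW (divr_gt0 (mulr_gt0 M0 w0) v0)).
  pose W' : {finite_measure set T -> \bar R} := measure_add W (mscale c V).
  have WpE (A : set T) : W' A = W A + c%:num%:E * V A := measure_addE _ _ A.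
  have VSW' : VS W' S X = VS W S X.
    apply: eq_VS => s Ss sX; rewrite WpE.
    have -> : V s = 0 by apply/eqP; rewrite eq_le measure_ge0 -VS0 VS_ge_piece.
    by rewrite mule0 adde0.
  have acW' : ac_finite W'.
    move=> N N0 A mA AN.
    by rewrite WpE (acW N N0 A mA AN) (acV N N0 A mA AN) mule0 adde0.
  apply: (@le_trans _ _ (W' X * (VS W' S X)^-1)).
    rewrite VSW' WpE -WE -VE -VSWE inver gt_eqF // -EFinM lee_fin /=.
    rewrite ler_pdivlMr // [X in (_ <= _ + X)%R]divfK ?gt_eqF //; lra.
  by apply: ereal_sup_ubound; exists W'; split; rewrite ?VSW'.
case: asboolP => // /(ac_finite_null _ _ acV mX) VX0'.
by move: VX0; rewrite VX0' ltxx.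
Qed.

Lemma inv_VS_le_Loss_add (V : {finite_measure set T -> \bar R}) S X Y :
  (forall s, S s -> measurable s) -> ac_finite V -> measurable X -> measurable Y ->
  V X + V Y = 1 -> VS V S X = VS V S Y -> (VS V S X)^-1 <= Loss X S + Loss Y S.
Proof.
move=> mS acV mX mY VXY VSXY.
have [VS0|VS0] := eqVneq (VS V S X) 0; last first.
  have VSpos : 0 < VS V S X by rewrite lt0e VS0 VS_ge0.
  rewrite -[X in X <= _]mul1e -VXY ge0_muleDl ?measure_ge0 //.
  by apply: leeD; [|rewrite VSXY]; apply: ratio_le_Loss; rewrite // -VSXY.
rewrite VS0 inve0 leye_eq.
have [VX0|VY0] : 0 < V X \/ 0 < V Y.
  have [VX0|VX0] := ltP 0 (V X); [by left | right].
  have {}VX0 : V X = 0 by apply/le_anti; rewrite VX0 measure_ge0.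
  by move: VXY; rewrite VX0 add0e => ->; exact: lte01.
- rewrite (Loss_pinfty _ _ _ mS acV mX VX0 VS0) addye // gt_eqF //.
  exact: lt_le_trans (Loss_ge0 _ _).
- rewrite (Loss_pinfty _ _ _ mS acV mY VY0) -?VSXY // addey // gt_eqF //.
  exact: lt_le_trans (Loss_ge0 _ _).
Qed.

Lemma balancing_point_exists (V : {finite_measure set T -> \bar R}) S (C : set T)
    (K : R -> set T) :
  (forall s, S s -> measurable s) ->
  {within `[0%R, 1%R], continuous (fun t => VS V S (K t))} ->
  {within `[0%R, 1%R], continuous (fun t => VS V S (knife_compl C K t))} ->
  VS V S (K 0%R) <= VS V S (knife_compl C K 0%R) ->
  VS V S (knife_compl C K 1%R) <= VS V S (K 1%R) ->
  exists2 t, t \in `[0%R, 1%R] & VS V S (K t) = VS V S (knife_compl C K t).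
Proof.
move=> mS cK cKc le0 le1; have fin X := VS_fin_num V S X mS.
pose f t := (fine (VS V S (K t)) - fine (VS V S (knife_compl C K t)))%R.
have cf : {within `[0%R, 1%R], continuous f}.
  by move=> t; apply: cvgB; apply: fine_cvg; rewrite fineK ?fin //; [exact: cK|exact: cKc].
have f01 : (Num.min (f 0%R) (f 1%R) <= 0 <= Num.max (f 0%R) (f 1%R))%R.
  rewrite ge_min le_max /f !(subr_le0, subr_ge0).
  by apply/andP; split; [apply/orP; left | apply/orP; right]; apply: fine_le; rewrite ?fin.
have [t t01 /eqP] := IVT ler01 cf f01.
by rewrite subr_eq0 => /eqP ft; exists t; rewrite // -[LHS]fineK ?ft ?fineK.
Qed.

Lemma value_density_measure (C : set T) (v : T -> R) :
  measurable C -> value_density C v ->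
  exists2 V : {finite_measure set T -> \bar R},
    ac_finite V & forall X, X `<=` C -> V X = value_measure v X.
Proof.
move=> mC [v0 [_ intv]]; rewrite -lebE in intv.
pose g := (EFin \o v) \_ C.
have intg : leb.-integrable setT g by apply/(integrable_mkcond _ mC).
have g0 x : 0 <= g x by rewrite /g patchE; case: ifP => // /set_mem /v0.
exists (density_measure intg g0).
  by rewrite /ac_finite -lebE; exact: density_measure_dominates.
move=> X XC; rewrite /value_measure -lebE; apply: eq_trans (density_measureE _ _ X) _.
by apply: eq_integral => x /set_mem Xx; rewrite /g patchE mem_set //; exact: XC.
Qed.

Let in01_0 : (0%R : R) \in `[0%R, 1%R]. Proof. by rewrite in_itv /= lexx ler01. Qed.
Let in01_1 : (1%R : R) \in `[0%R, 1%R]. Proof. by rewrite in_itv /= lexx ler01. Qed.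

Section knife.
Context {V : set T -> \bar R} {S : set (set T)} {C C0 C1 : set T} {K : R -> set T}.
Hypothesis K_mono : forall t t', t \in `[0%R, 1%R] -> t' \in `[0%R, 1%R] ->
  (t <= t')%R -> K t `<=` K t'.
Hypotheses (K0 : K 0%R = C0) (K1 : K 1%R = C1).
Local Notation VS := (VS V S).
Local Notation Kc := (knife_compl C K).

Let in01_ge0 {t : R} : t \in `[0%R, 1%R] -> (0 <= t)%R.
Proof. by rewrite in_itv => /andP[]. Qed.
Let in01_le1 {t : R} : t \in `[0%R, 1%R] -> (t <= 1)%R.
Proof. by rewrite in_itv => /andP[]. Qed.

Lemma knife_compl_mono t t' : t \in `[0%R, 1%R] -> t' \in `[0%R, 1%R] ->
  (t <= t')%R -> Kc t' `<=` Kc t.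
Proof. by move=> t01 t'01 tt' x [Cx Kx]; split => // /(K_mono _ _ t01 t'01 tt'). Qed.

Lemma knife_share_after t1 ts l : t1 \in `[0%R, 1%R] -> ts \in `[0%R, 1%R] ->
  (t1 <= ts)%R -> VS (K t1) = VS (Kc t1) -> l <= VS (K t1) ->
  [/\ VS (Kc ts) <= VS (K ts), VS C0 <= VS (K ts), VS (C `\` C1) <= VS (K ts)
    & l <= VS (K ts)].
Proof.
move=> t01 s01 t1s bal lK.
have le_K : VS (K t1) <= VS (K ts) by apply: le_VS; exact: K_mono.
have le_Kc : VS (Kc ts) <= VS (Kc t1) by apply: le_VS; exact: knife_compl_mono.
have Kc_K : VS (Kc ts) <= VS (K ts) by rewrite (le_trans le_Kc) // -bal.
split; last exact: le_trans le_K.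
- exact: Kc_K.
- by rewrite -K0; apply: le_VS; exact: K_mono _ _ in01_0 s01 (in01_ge0 s01).
- rewrite -K1; apply: le_trans Kc_K.
  by apply: le_VS; exact: knife_compl_mono _ _ s01 in01_1 (in01_le1 s01).
Qed.

Lemma knife_compl_share_before t2 ts l : t2 \in `[0%R, 1%R] -> ts \in `[0%R, 1%R] ->
  (ts <= t2)%R -> VS (K t2) = VS (Kc t2) -> l <= VS (K t2) ->
  [/\ VS (K ts) <= VS (Kc ts), VS C0 <= VS (Kc ts), VS (C `\` C1) <= VS (Kc ts)
    & l <= VS (Kc ts)].
Proof.
move=> t01 s01 st2 bal lK.
have le_K : VS (K ts) <= VS (K t2) by apply: le_VS; exact: K_mono.
have le_Kc : VS (Kc t2) <= VS (Kc ts) by apply: le_VS; exact: knife_compl_mono.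
have K_Kc : VS (K ts) <= VS (Kc ts) by rewrite (le_trans le_K) // bal.
split; last by rewrite (le_trans lK) // bal.
- exact: K_Kc.
- rewrite -K0; apply: le_trans K_Kc.
  by apply: le_VS; exact: K_mono _ _ in01_0 s01 (in01_ge0 s01).
- by rewrite -K1; apply: le_VS; exact: knife_compl_mono _ _ s01 in01_1 (in01_le1 s01).
Qed.

End knife.

Lemma agent_balancing S (C C0 C1 : set T) (K : R -> set T) (v : T -> R) :
  measurable C -> (forall s, S s -> measurable s) ->
  knife_function C C0 C1 K -> S_good C S K ->
  value_density C v -> value_measure v C = 1 ->
  VS (value_measure v) S C0 <= VS (value_measure v) S (C `\` C0) ->
  VS (value_measure v) S (C `\` C1) <= VS (value_measure v) S C1 ->
  (exists2 t, t \in `[0%R, 1%R] &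
    VS (value_measure v) S (K t) = VS (value_measure v) S (knife_compl C K t)) /\
  (forall t, t \in `[0%R, 1%R] ->
    VS (value_measure v) S (K t) = VS (value_measure v) S (knife_compl C K t) ->
    (knife_loss C S K)^-1 <= VS (value_measure v) S (K t)).
Proof.
move=> mC mS [Kpc [_ [K0 K1]]] goodK dv v1 le0 le1.
have [V acV VE] := value_density_measure _ _ mC dv.
have VSE X : X `<=` C -> VS V S X = VS (value_measure v) S X.
  by move=> XC; apply: eq_VS => s _ sX; apply/VE/(subset_trans sX).
have KC t : t \in `[0%R, 1%R] -> K t `<=` C by move=> /Kpc[].
have KcC t : knife_compl C K t `<=` C by move=> x [].
split.
  have [cK cKc] := goodK V acV.
  have [||t t01 bal] := balancing_point_exists _ _ _ _ mS cK cKc.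
  - by rewrite (VSE _ (KC _ in01_0)) VSE // /knife_compl K0.
  - by rewrite (VSE _ (KC _ in01_1)) VSE // /knife_compl K1.
  - by exists t; rewrite // -(VSE _ (KC _ t01)) -VSE.
move=> t t01 bal.
have mK : measurable (K t) by have [] := Kpc t t01.
have VK : V (K t) + V (knife_compl C K t) = 1.
  rewrite -measureU ?setDIK //; last exact: measurableD.
  rewrite setDUK; last exact: KC.
  by rewrite -v1; apply: VE.
have := inv_VS_le_Loss_add _ _ _ _ mS acV mK (measurableD mC mK) VK.
rewrite (VSE _ (KC _ t01)) (VSE _ (KcC t)) => /(_ bal) inv_le.
have le_loss : Loss (K t) S + Loss (knife_compl C K t) S <= knife_loss C S K.
  by apply: ereal_sup_ubound; exists t.
have loss_ge0 : 0 <= knife_loss C S K.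
  by apply: le_trans le_loss; rewrite adde_ge0 ?Loss_ge0.
rewrite -[leRHS]inveK lee_pV2 ?inE ?inve_ge0 ?VS_ge0 //.
exact: le_trans le_loss.
Qed.

End cake.

Theorem mainTheorem3 (R : realType) (d : nat)
  (C : set (Rd R d)) (S : set (set (Rd R d))) (C0 C1 : set (Rd R d))
  (K : R -> set (Rd R d)) (vA vB : Rd R d -> R) :
  piece C ->
  (forall s, S s -> piece s) ->
  piece C0 -> piece C1 -> C0 `<=` C1 -> C1 `<=` C ->
  knife_function C C0 C1 K ->
  S_good C S K ->
  value_density C vA -> value_density C vB ->
  value_measure vA C = 1%E -> value_measure vB C = 1%E ->
  (VS (value_measure vA) S C0 <= VS (value_measure vA) S (C `\` C0))%E ->
  (VS (value_measure vA) S C1 >= VS (value_measure vA) S (C `\` C1))%E ->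
  (VS (value_measure vB) S C0 <= VS (value_measure vB) S (C `\` C0))%E ->
  (VS (value_measure vB) S C1 >= VS (value_measure vB) S (C `\` C1))%E ->
  let VAS := VS (value_measure vA) S in
  let VBS := VS (value_measure vB) S in
  let L := knife_loss C S K in
  (* agent i with S-value function ViS is satisfied with own piece P vs other piece Q *)
  let satisfied (ViS : set (Rd R d) -> \bar R) (P Q : set (Rd R d)) :=
    [/\ (ViS P >= ViS Q)%E, (ViS P >= ViS C0)%E, (ViS P >= ViS (C `\` C1))%E
      & (ViS P >= L^-1)%E] in
  (* existence of balancing points *)
  (exists tA, tA \in `[0, 1] /\ VAS (K tA) = VAS (knife_compl C K tA)) /\
  (exists tB, tB \in `[0, 1] /\ VBS (K tB) = VBS (knife_compl C K tB)) /\
  (* for any balancing points, the agent with the smaller one gets K ts *)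
  (forall tA tB, tA \in `[0, 1] -> tB \in `[0, 1] ->
     VAS (K tA) = VAS (knife_compl C K tA) ->
     VBS (K tB) = VBS (knife_compl C K tB) ->
     (tA <= tB -> forall ts, ts \in `[tA, tB] ->
        satisfied VAS (K ts) (knife_compl C K ts) /\
        satisfied VBS (knife_compl C K ts) (K ts)) /\
     (tB <= tA -> forall ts, ts \in `[tB, tA] ->
        satisfied VBS (K ts) (knife_compl C K ts) /\
        satisfied VAS (knife_compl C K ts) (K ts))).
Proof.
move=> mC mS _ _ _ _ knifeK goodK dA dB vA1 vB1 hA0 hA1 hB0 hB1 VAS VBS L sat.
have [leb lebE] := lebesgue_d_sigma_finite R d.
have [_ [K_mono [K0 K1]]] := knifeK.
have [[tA tA01 balA] lossA] :=
  agent_balancing _ lebE _ _ _ _ _ _ mC mS knifeK goodK dA vA1 hA0 hA1.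
have [[tB tB01 balB] lossB] :=
  agent_balancing _ lebE _ _ _ _ _ _ mC mS knifeK goodK dB vB1 hB0 hB1.
split; first by exists tA.
split; first by exists tB.
move=> {}tA {}tB {}tA01 {}tB01 {}balA {}balB.
have in01 (a b t : R) : a \in `[0, 1] -> b \in `[0, 1] -> t \in `[a, b] -> t \in `[0, 1].
  rewrite !in_itv /= => /andP[a0 _] /andP[_ b1] /andP[le_at le_tb].
  by rewrite (le_trans a0 le_at) (le_trans le_tb b1).
split=> [_ ts tsAB | _ ts tsBA].
- have ts01 := in01 _ _ _ tA01 tB01 tsAB.
  move: tsAB; rewrite in_itv /= => /andP[Ats tsB]; split.
  + exact: knife_share_after K_mono K0 K1 _ _ _ tA01 ts01 Ats balA (lossA _ tA01 balA).
  + exact: knife_compl_share_before K_mono K0 K1 _ _ _ tB01 ts01 tsB balB (lossB _ tB01 balB).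
- have ts01 := in01 _ _ _ tB01 tA01 tsBA.
  move: tsBA; rewrite in_itv /= => /andP[Bts tsA]; split.
  + exact: knife_share_after K_mono K0 K1 _ _ _ tB01 ts01 Bts balB (lossB _ tB01 balB).
  + exact: knife_compl_share_before K_mono K0 K1 _ _ _ tA01 ts01 tsA balA (lossA _ tA01 balA).
Qed.
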